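(* Let $T_1,T_2$ be tables joined on column $J$ with frequencies $a_v,b_v$ ($v\in\mathcal U$). Fix UBS parameters $(p_1,q_1)$ with $0<p_1,q_1\le1$ for $T_1$, and fix an effective sampling rate $\epsilon_2\in(0,1]$ for $T_2$ with $\epsilon_2\le p_1$. Over all UBS parameters $(p_2,q_2)$ for $T_2$ with $p_2\in[\epsilon_2,1]$ and $q_2=\epsilon_2/p_2$, the variance of $\hat J_{\mathrm{count}}=\frac{1}{\min\{p_1,p_2\}q_1q_2}|S_1\bowtie_J S_2|$ (where $S_1=\mathrm{UBS}_{p_1,q_1}(T_1,J)$, $S_2=\mathrm{UBS}_{p_2,q_2}(T_2,J)$) is minimized when $p_2=p_1$ and $q_2=\epsilon_2/p_1$.
   Context: $T_1,T_2$ are finite multisets of tuples with a join attribute $J$ taking values in a finite set $\mathcal U$; $a_v$ (resp. $b_v$) is the number of tuples of $T_1$ (resp. $T_2$) with $J$-value $v$. $S_1\bowtie_J S_2$ is the set of pairs $(t_1,t_2)\in S_1\times S_2$ with $t_1.J=t_2.J$. $\mathrm{UBS}_{p,q}(T,J)$: given a hash function $h:\mathcal U\to[0,1]$, each tuple $t\in T$ with $h(t.J)<p$ is included independently with probability $q$; others are excluded. The values $h(v)$ are independent uniform on $[0,1]$, the same $h$ is used for both tables, and the Bernoulli coins are independent across all tuples and independent of $h$. The effective sampling rate of $\mathrm{UBS}_{p,q}$ is $pq$. *)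

From HB Require Import structures.
From mathcomp Require Import all_boot all_order all_algebra.
Set Implicit Arguments. Unset Strict Implicit. Unset Printing Implicit Defensive.
Import Order.TTheory GRing.Theory Num.Theory.
Local Open Scope ring_scope.

(* Tables: T1, T2 are finite types of tuple identities (so duplicates in a
   multiset are distinct elements); key1/key2 give the join attribute J with
   values in the finite set U.  a_v = #|{t : T1 | key1 t = v}|, likewise b_v. *)

(* Hash values: the hash h(v) ~ Unif[0,1] enters UBS_{p1,q1} and
   UBS_{p2,q2} only through the events h(v) < p1, h(v) < p2.  We use the exact
   push-forward of h(v) under rounding down to the grid {0, min p1 p2, max p1 p2}:
   grid point k has value hval k and probability hweight k. *)
Definition hval (R : realFieldType) (p1 p2 : R) (k : 'I_3) : R :=
  nth 0 [:: 0; Num.min p1 p2; Num.max p1 p2] k.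
Definition hweight (R : realFieldType) (p1 p2 : R) (k : 'I_3) : R :=
  nth 0 [:: Num.min p1 p2; Num.max p1 p2 - Num.min p1 p2; 1 - Num.max p1 p2] k.
Definition coinw (R : realFieldType) (q : R) (b : bool) : R :=
  if b then q else 1 - q.

(* Outcomes: hash level per join value, Bernoulli coin per tuple of T1 and T2. *)
Definition Omega (U T1 T2 : finType) : finType :=
  ({ffun U -> 'I_3} * {ffun T1 -> bool} * {ffun T2 -> bool})%type.

Definition prob (R : realFieldType) (U T1 T2 : finType)
  (p1 q1 p2 q2 : R) (w : Omega U T1 T2) : R :=
  (\prod_(v : U) hweight p1 p2 (w.1.1 v)) *
  (\prod_(t : T1) coinw q1 (w.1.2 t)) * (\prod_(t : T2) coinw q2 (w.2 t)).

Definition S1 (R : realFieldType) (U T1 T2 : finType) (key1 : T1 -> U)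
  (p1 p2 : R) (w : Omega U T1 T2) : {set T1} :=
  [set t | (hval p1 p2 (w.1.1 (key1 t)) < p1) && w.1.2 t].
Definition S2 (R : realFieldType) (U T1 T2 : finType) (key2 : T2 -> U)
  (p1 p2 : R) (w : Omega U T1 T2) : {set T2} :=
  [set t | (hval p1 p2 (w.1.1 (key2 t)) < p2) && w.2 t].

Definition join_size (R : realFieldType) (U T1 T2 : finType)
  (key1 : T1 -> U) (key2 : T2 -> U) (p1 p2 : R) (w : Omega U T1 T2) : nat :=
  #|[set x : T1 * T2 | [&& x.1 \in S1 key1 p1 p2 w, x.2 \in S2 key2 p1 p2 w
                        & key1 x.1 == key2 x.2]]|.

Definition Jcount (R : realFieldType) (U T1 T2 : finType)
  (key1 : T1 -> U) (key2 : T2 -> U) (p1 q1 p2 q2 : R) (w : Omega U T1 T2) : R :=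
  (join_size key1 key2 p1 p2 w)%:R / (Num.min p1 p2 * q1 * q2).

Definition Expect (R : realFieldType) (U T1 T2 : finType)
  (p1 q1 p2 q2 : R) (X : Omega U T1 T2 -> R) : R :=
  \sum_(w : Omega U T1 T2) prob p1 q1 p2 q2 w * X w.

Definition Var_Jcount (R : realFieldType) (U T1 T2 : finType)
  (key1 : T1 -> U) (key2 : T2 -> U) (p1 q1 p2 q2 : R) : R :=
  let X := Jcount key1 key2 p1 q1 p2 q2 in
  let m := Expect p1 q1 p2 q2 X in
  Expect p1 q1 p2 q2 (fun w => (X w - m) ^+ 2).

(* Let M be the set of matching pairs x = (t1, t2), v_x their common join value,
   and X_x the indicator that both tuples of x are sampled.  For x, y in M,
   X_x X_y = 1 iff the hashes of v_x and v_y lie below m = min(p1, p2) and the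
   coins of x.1, y.1, x.2, y.2 all come up heads, so by independence
   E[X_x X_y] = m^|{v_x, v_y}| q1^|{x.1, y.1}| q2^|{x.2, y.2}|.  Hence the
   estimator is unbiased, E[J_count] = |M|, and
     E[J_count^2] = sum_{x, y in M} q1^-[x.1 = y.1] m^-[v_x = v_y] q2^-[x.2 = y.2].
   With q2 = eps/p2 the last two factors are termwise smallest at p2 = p1: if
   x.2 = y.2 they give p2 / (m eps) >= 1 / eps, and otherwise m^-[v_x = v_y] is
   smallest for the largest possible value m = p1. *)

From HB Require Import structures.
From mathcomp Require Import all_boot all_order all_algebra.
From mathcomp Require Import ring.
Import Order.TTheory GRing.Theory Num.Theory.
Set Implicit Arguments. Unset Strict Implicit. Unset Printing Implicit Defensive.
Local Open Scope ring_scope.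

Lemma forall_in_set2 (T : finType) (a b : T) (Q : pred T) :
  [forall x in [set a; b], Q x] = Q a && Q b.
Proof.
apply/forall_inP/andP => [Qab | [Qa Qb] x].
  by split; apply: Qab; rewrite !inE eqxx ?orbT.
by rewrite !inE => /orP[] /eqP->.
Qed.

Lemma prodr_natr_bool (R : comPzSemiRingType) (I : finType) (P : pred I) :
  \prod_i (P i)%:R = [forall i, P i]%:R :> R.
Proof.
have [/forallP allP | /forallPn[i /negbTE Pi]] := boolP [forall i, P i].
  by rewrite big1 // => i _; rewrite allP.
by rewrite (bigD1 i) //= Pi mul0r.
Qed.

Lemma prod_sum_implyr (R : comPzSemiRingType) (I K : finType) (A : {set I})
    (w : K -> R) (P : pred K) :
  \sum_k w k = 1 ->
  \prod_i \sum_k w k * ((i \in A) ==> P k)%:R = (\sum_k w k * (P k)%:R) ^+ #|A|.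
Proof.
move=> w1; rewrite (bigID (mem A)) /= [X in _ * X]big1 ?mulr1 => [|i /negbTE iA].
  by rewrite -prodr_const; apply: eq_bigr => i iA; under eq_bigr do rewrite iA.
by under eq_bigr do rewrite iA mulr1.
Qed.

Lemma exprn_cards2 (R : fieldType) (T : finType) (x : R) (a b : T) : x != 0 ->
  x ^+ #|[set a; b]| / x ^+ 2 = x ^- (a == b).
Proof.
by move=> x0; rewrite cards2; case: eqP => _ /=; [field | rewrite divff ?invr1 ?expf_neq0].
Qed.

Section Weights.
Variables (R : realFieldType) (p1 p2 : R).

Lemma sum_hweight : \sum_k hweight p1 p2 k = 1.
Proof. by rewrite !big_ord_recl big_ord0 /hweight /=; ring. Qed.

Lemma sum_hweight_below : 0 < p1 -> 0 < p2 ->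
  \sum_k hweight p1 p2 k * ((hval p1 p2 k < p1) && (hval p1 p2 k < p2))%:R = Num.min p1 p2.
Proof.
move=> p1_gt0 p2_gt0.
rewrite !big_ord_recl big_ord0 /hval /hweight /= p1_gt0 p2_gt0.
rewrite !gt_min !gt_max !ltxx /= orbF lt_asym.
by rewrite !mulr0 !addr0 mulr1.
Qed.

Lemma sum_coinw (q : R) : \sum_b coinw q b = 1.
Proof. by rewrite big_bool /coinw /=; ring. Qed.

Lemma sum_coinw_true (q : R) : \sum_b coinw q b * b%:R = q.
Proof. by rewrite big_bool /coinw /=; ring. Qed.

End Weights.

Section ProductRandomVariables.
Variables (R : realFieldType) (U T1 T2 : finType).

Definition prod_rv (g : U -> 'I_3 -> R) (h1 : T1 -> bool -> R) (h2 : T2 -> bool -> R)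
    (w : Omega U T1 T2) : R :=
  (\prod_x g x (w.1.1 x)) * (\prod_t h1 t (w.1.2 t)) * (\prod_t h2 t (w.2 t)).

Lemma prod_rvM g h1 h2 g' h1' h2' w :
  prod_rv g h1 h2 w * prod_rv g' h1' h2' w =
  prod_rv (fun x k => g x k * g' x k) (fun t b => h1 t b * h1' t b)
          (fun t b => h2 t b * h2' t b) w.
Proof. by rewrite /prod_rv !big_split /=; ring. Qed.

Lemma sum_prod_rv g h1 h2 :
  \sum_w prod_rv g h1 h2 w =
  (\prod_x \sum_k g x k) * (\prod_t \sum_b h1 t b) * (\prod_t \sum_b h2 t b).
Proof.
rewrite !bigA_distr_bigA /= !big_distrl /=.
under [RHS]eq_bigr do rewrite -mulrA big_distrlr big_distrr /=.
under [RHS]eq_bigr do under eq_bigr do rewrite big_distrr /=.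
by rewrite pair_bigA pair_bigA; apply: eq_bigr => w _; rewrite mulrA.
Qed.

Lemma Expect_prod_rv p1 q1 p2 q2 g h1 h2 :
  Expect p1 q1 p2 q2 (prod_rv g h1 h2) =
  (\prod_x \sum_k hweight p1 p2 k * g x k) *
  (\prod_t \sum_b coinw q1 b * h1 t b) * (\prod_t \sum_b coinw q2 b * h2 t b).
Proof.
rewrite -sum_prod_rv; apply: eq_bigr => w _.
exact: (prod_rvM (fun _ => hweight p1 p2) (fun _ => coinw q1) (fun _ => coinw q2)).
Qed.

End ProductRandomVariables.

Section Expectation.
Context {R : realFieldType} {U T1 T2 : finType} {p1 q1 p2 q2 : R}.
Local Notation E := (@Expect R U T1 T2 p1 q1 p2 q2).

Lemma eq_Expect X Y : X =1 Y -> E X = E Y.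
Proof. by move=> eXY; apply: eq_bigr => w _; rewrite eXY. Qed.

Lemma Expect1 : E (fun=> 1) = 1.
Proof.
rewrite /Expect; under eq_bigr do rewrite mulr1.
rewrite (sum_prod_rv (fun _ => hweight p1 p2) (fun _ => coinw q1) (fun _ => coinw q2)).
rewrite sum_hweight big1_eq (eq_bigr (fun=> 1)) => [|t _]; last exact: sum_coinw.
rewrite big1_eq (eq_bigr (fun=> 1)) => [|t _]; last exact: sum_coinw.
by rewrite !big1_eq !mulr1.
Qed.

Lemma ExpectD X Y : E (fun w => X w + Y w) = E X + E Y.
Proof. by rewrite -big_split; apply: eq_bigr => w _; rewrite mulrDr. Qed.

Lemma ExpectZ c X : E (fun w => c * X w) = c * E X.
Proof. by rewrite mulr_sumr; apply: eq_bigr => w _; rewrite mulrCA. Qed.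

Lemma Expect_sum (I : finType) (A : {pred I}) (F : I -> Omega U T1 T2 -> R) :
  E (fun w => \sum_(i in A) F i w) = \sum_(i in A) E (F i).
Proof. by rewrite exchange_big; apply: eq_bigr => w _; rewrite mulr_sumr. Qed.

Lemma Expect_centered_sq X :
  E (fun w => (X w - E X) ^+ 2) = E (fun w => X w ^+ 2) - E X ^+ 2.
Proof.
rewrite (@eq_Expect _ (fun w => X w ^+ 2 + (- 2 * E X * X w + E X ^+ 2 * 1))).
  by rewrite !ExpectD !ExpectZ Expect1; ring.
by move=> w; ring.
Qed.

End Expectation.

Section SampledPairs.
Variables (R : realFieldType) (U T1 T2 : finType) (key1 : T1 -> U) (key2 : T2 -> U).
Variables (p1 q1 p2 q2 : R).
Hypotheses (p1_gt0 : 0 < p1) (p2_gt0 : 0 < p2) (q1_gt0 : 0 < q1) (q2_gt0 : 0 < q2).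
Local Notation E := (@Expect R U T1 T2 p1 q1 p2 q2).
Local Notation m := (Num.min p1 p2).

Definition matching : {set T1 * T2} := [set x | key1 x.1 == key2 x.2].

Definition sampled (x : T1 * T2) (w : Omega U T1 T2) : R :=
  ((x.1 \in S1 key1 p1 p2 w) && (x.2 \in S2 key2 p1 p2 w))%:R.

Lemma sampledM x y w : x \in matching -> y \in matching ->
  sampled x w * sampled y w =
  prod_rv (fun v k => ((v \in [set key2 x.2; key2 y.2]) ==>
                         (hval p1 p2 k < p1) && (hval p1 p2 k < p2))%:R)
          (fun t b => ((t \in [set x.1; y.1]) ==> b)%:R)
          (fun t b => ((t \in [set x.2; y.2]) ==> b)%:R) w.
Proof.
rewrite !inE => /eqP ex /eqP ey.
rewrite /sampled /prod_rv !prodr_natr_bool -!natrM !mulnb !forall_in_set2 !inE ex ey.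
congr _%:R; set hx := hval p1 p2 _; set hy := hval p1 p2 _.
by case: (hx < p1); case: (hx < p2); case: (hy < p1); case: (hy < p2);
   case: (w.1.2 x.1); case: (w.1.2 y.1); case: (w.2 x.2); case: (w.2 y.2).
Qed.

Lemma Expect_sampledM x y : x \in matching -> y \in matching ->
  E (fun w => sampled x w * sampled y w) =
  m ^+ #|[set key2 x.2; key2 y.2]| * q1 ^+ #|[set x.1; y.1]| * q2 ^+ #|[set x.2; y.2]|.
Proof.
move=> xM yM; rewrite (eq_Expect (fun w => sampledM w xM yM)) Expect_prod_rv.
by rewrite !prod_sum_implyr ?sum_hweight ?sum_coinw ?sum_hweight_below ?sum_coinw_true.
Qed.

Lemma Expect_sampled x : x \in matching -> E (sampled x) = m * q1 * q2.
Proof.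
move=> xM; transitivity (E (fun w => sampled x w * sampled x w)).
  by apply: eq_Expect => w; rewrite /sampled -natrM mulnb andbb.
by rewrite Expect_sampledM // !cards2 !eqxx !expr1.
Qed.

Lemma JcountE w :
  Jcount key1 key2 p1 q1 p2 q2 w = (m * q1 * q2)^-1 * \sum_(x in matching) sampled x w.
Proof.
rewrite /Jcount /join_size -sum1_card natr_sum mulrC; congr (_ * _).
rewrite big_mkcond [RHS]big_mkcond; apply: eq_bigr => x _.
by rewrite /sampled !inE andbA; case: (_ == _); rewrite ?andbT ?andbF //; case: [&& _, _ & _].
Qed.

Let m_gt0 : 0 < m. Proof. by rewrite lt_min p1_gt0. Qed.

Lemma Expect_Jcount : E (Jcount key1 key2 p1 q1 p2 q2) = #|matching|%:R.
Proof.
rewrite (eq_Expect JcountE) ExpectZ Expect_sum.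
under eq_bigr => x xM do rewrite Expect_sampled //.
by rewrite sumr_const mulrnAr mulVf // !mulf_neq0 ?gt_eqF.
Qed.

Lemma Expect_Jcount_sq :
  E (fun w => Jcount key1 key2 p1 q1 p2 q2 w ^+ 2) =
  \sum_(x in matching) \sum_(y in matching)
    q1 ^- (x.1 == y.1) * (m ^- (key2 x.2 == key2 y.2) * q2 ^- (x.2 == y.2)).
Proof.
transitivity (E (fun w => (m * q1 * q2)^-1 ^+ 2 *
  \sum_(x in matching) \sum_(y in matching) sampled x w * sampled y w)).
  apply: eq_Expect => w; rewrite JcountE exprMn; congr (_ * _).
  by rewrite expr2 big_distrlr.
rewrite ExpectZ Expect_sum mulr_sumr; apply: eq_bigr => x xM.
rewrite Expect_sum mulr_sumr; apply: eq_bigr => y yM.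
rewrite Expect_sampledM // -!exprn_cards2 ?gt_eqF //.
by rewrite exprVn !exprMn !invfM; ring.
Qed.

Lemma Var_JcountE :
  Var_Jcount key1 key2 p1 q1 p2 q2 =
  \sum_(x in matching) \sum_(y in matching)
    q1 ^- (x.1 == y.1) * (m ^- (key2 x.2 == key2 y.2) * q2 ^- (x.2 == y.2))
  - #|matching|%:R ^+ 2.
Proof. by rewrite /Var_Jcount Expect_centered_sq Expect_Jcount_sq Expect_Jcount. Qed.

End SampledPairs.

Lemma inv_sampling_factor_le (R : realFieldType) (p1 p2 eps : R) (k t : bool) :
  0 < p1 -> 0 < p2 -> 0 < eps -> t ==> k ->
  p1 ^- k * (eps / p1) ^- t <= Num.min p1 p2 ^- k * (eps / p2) ^- t.
Proof.
move=> p1_gt0 p2_gt0 eps_gt0; have m_gt0 : 0 < Num.min p1 p2 by rewrite lt_min p1_gt0.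
case: k; case: t => //= _; rewrite ?expr0 ?expr1 ?invr1 ?mulr1 //.
  rewrite !invf_div mulrA mulVf ?gt_eqF // mul1r mulrA.
  apply: ler_peMl; first by rewrite invr_ge0 ltW.
  by rewrite mulrC ler_pdivlMr // mul1r ge_min lexx orbT.
by rewrite lef_pV2 ?posrE // ge_min lexx.
Qed.

Theorem lemma2 (R : realFieldType) (U T1 T2 : finType)
  (key1 : T1 -> U) (key2 : T2 -> U) (p1 q1 eps2 : R) :
  0 < p1 <= 1 -> 0 < q1 <= 1 -> 0 < eps2 <= 1 -> eps2 <= p1 ->
  forall p2 : R, eps2 <= p2 <= 1 ->
    Var_Jcount key1 key2 p1 q1 p1 (eps2 / p1)
      <= Var_Jcount key1 key2 p1 q1 p2 (eps2 / p2).
Proof.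
(* The upper bounds only make the weights probabilities: the variance formula
   of Var_JcountE is an algebraic identity needing just positivity. *)
move=> /andP[p1_gt0 _] /andP[q1_gt0 _] /andP[eps2_gt0 _] _ p2 /andP[eps2_le_p2 _].
have p2_gt0 : 0 < p2 := lt_le_trans eps2_gt0 eps2_le_p2.
rewrite !Var_JcountE ?divr_gt0 // minxx lerD2r.
apply: ler_sum => x _; apply: ler_sum => y _.
apply: ler_wpM2l; first by rewrite invr_ge0 exprn_ge0 ?ltW.
by apply: inv_sampling_factor_le => //; apply/implyP => /eqP->.
Qed.
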